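(* Let $(g,[\cdot,\cdot]_1,[\cdot,\cdot]_2,\alpha,\beta)$ be a compatible BiHom-Lie algebra and $(V,\bullet_1,\bullet_2,\alpha_V,\beta_V)$ a representation of it (with $\alpha,\beta,\alpha_V,\beta_V$ bijective). Let $g_+=(g,[\cdot,\cdot]_1+[\cdot,\cdot]_2,\alpha,\beta)$, a BiHom-Lie algebra, and $V_+=(V,\bullet_1+\bullet_2,\alpha_V,\beta_V)$, a representation of $g_+$. Define $\varphi_n:C^n_{cBiHom}(g,V)\to C^n_{BiHom}(g_+,V_+)$ by $\varphi_0(v)=\frac12 v$ for $v\in C^0_{cBiHom}(g,V)$ and $\varphi_n(f_1,\dots,f_n)=f_1+\dots+f_n$ for $n\ge1$. Then $\{\varphi_n\}_{n\ge0}$ is a morphism of cochain complexes from $\{C^\ast_{cBiHom}(g,V),\delta_{cBiHom}\}$ to $\{C^\ast_{BiHom}(g_+,V_+),\delta_{BiHom}\}$, and hence induces a morphism $H^\ast_{cBiHom}(g,V)\to H^\ast_{BiHom}(g_+,V_+)$ between the corresponding cohomologies.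
   Context: A BiHom-Lie algebra is $(g,[\cdot,\cdot],\alpha,\beta)$ with $\alpha,\beta$ linear, $\alpha\beta=\beta\alpha$, $[\beta(p),\alpha(q)]=-[\beta(q),\alpha(p)]$, $[\beta^{2}(p),[\beta(q),\alpha(r)]]+[\beta^{2}(q),[\beta(r),\alpha(p)]]+[\beta^{2}(r),[\beta(p),\alpha(q)]]=0$. A compatible BiHom-Lie algebra $(g,[\cdot,\cdot]_1,[\cdot,\cdot]_2,\alpha,\beta)$: both $(g,[\cdot,\cdot]_i,\alpha,\beta)$ are BiHom-Lie algebras and $\lambda[\cdot,\cdot]_1+\eta[\cdot,\cdot]_2$ gives a BiHom-Lie algebra for all $\lambda,\eta\in\mathbb{K}$. A representation $(V,\bullet,\alpha_V,\beta_V)$ of $(g,[\cdot,\cdot],\alpha,\beta)$: $\alpha_V,\beta_V$ commuting linear maps, $\bullet:g\otimes V\to V$ bilinear with $\alpha(p)\bullet\alpha_V(v)=\alpha_V(p\bullet v)$, $\beta(p)\bullet\beta_V(v)=\beta_V(p\bullet v)$, $[\beta(p),q]\bullet\beta_V(v)=\alpha\beta(p)\bullet(q\bullet v)-\beta(q)\bullet(\alpha(p)\bullet v)$. A representation of the compatible algebra is $(V,\bullet_1,\bullet_2,\alpha_V,\beta_V)$ with $(V,\bullet_i,\alpha_V,\beta_V)$ a representation of $(g,[\cdot,\cdot]_i,\alpha,\beta)$ and $[\beta(p),q]_1\bullet_2\beta_V(v)+[\beta(p),q]_2\bullet_1\beta_V(v)=\alpha\beta(p)\bullet_1(q\bullet_2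 v)-\beta(q)\bullet_2(\alpha(p)\bullet_1 v)+\alpha\beta(p)\bullet_2(q\bullet_1 v)-\beta(q)\bullet_1(\alpha(p)\bullet_2 v)$. Cochains: $C^0_{BiHom}(g,V)=\{v:\alpha_V(v)=v=\beta_V(v)\}$; $C^n_{BiHom}(g,V)=\{f:\otimes^n g\to V\text{ multilinear}:\alpha_V\circ f=f\circ\alpha^{\otimes n},\beta_V\circ f=f\circ\beta^{\otimes n}\}$ ($n\ge1$). For a BiHom-Lie algebra with representation $\bullet$, the coboundary $\delta_{BiHom}$ is $\delta_{BiHom}(v)(p)=\alpha\beta^{-1}(p)\bullet v$ on $C^0$, and $\delta_{BiHom}f(p_1,\dots,p_{n+1})=\sum_{i=1}^{n+1}(-1)^{i}\alpha\beta^{n-1}(p_i)\bullet f(p_1,\dots,\widehat{p_i},\dots,p_{n+1})+\sum_{1\le i<j\le n+1}(-1)^{i+j+1}f([\alpha^{-1}\beta(p_i),p_j],\beta(p_1),\dots,\widehat{\beta(p_i)},\dots,\widehat{\beta(p_j)},\dots,\beta(p_{n+1}))$; $H^\ast_{BiHom}$ is its cohomology. ${}^{i}\delta_{BiHom}$ denotes this coboundary for $(g,[\cdot,\cdot]_i,\alpha,\beta)$ with coefficients in $(V,\bullet_i,\alpha_V,\beta_V)$. The compatible complex: $C^{0}_{cBiHom}(g,V)=\{v\in V:\alpha_V(v)=v,\beta_V(v)=v,\ \alpha\beta^{-1}(p)\bullet_1 v=\alpha\beta^{-1}(p)\bullet_2 v\ \forall p\}$, $C^{n}_{cBiHom}(g,V)=C^n_{BiHom}(g,V)^{\oplus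 n}$ for $n\ge1$; $\delta_{cBiHom}(v)(p)=\alpha\beta^{-1}(p)\bullet_1 v$ and $\delta_{cBiHom}(f_1,\dots,f_n)=({}^{1}\delta_{BiHom}f_1,\dots,{}^{1}\delta_{BiHom}f_i+{}^{2}\delta_{BiHom}f_{i-1},\dots,{}^{2}\delta_{BiHom}f_n)$ (the $i$-th component for $2\le i\le n$ being ${}^{1}\delta_{BiHom}f_i+{}^{2}\delta_{BiHom}f_{i-1}$); $H^\ast_{cBiHom}(g,V)$ is its cohomology. *)

From mathcomp Require Import all_boot all_algebra.
Set Implicit Arguments. Unset Strict Implicit. Unset Printing Implicit Defensive.
Import GRing.Theory.
Local Open Scope ring_scope.

Section BiHom.
Variable K : fieldType.

Definition lin_map (A B : lmodType K) (f : A -> B) :=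
  forall (a : K) (x y : A), f (a *: x + y) = a *: f x + f y.

Definition bilin_map (A B C : lmodType K) (f : A -> B -> C) :=
  (forall (a : K) (x y : A) (z : B), f (a *: x + y) z = a *: f x z + f y z) /\
  (forall (a : K) (x : A) (y z : B), f x (a *: y + z) = a *: f x y + f x z).

Variables g V : lmodType K.

Definition is_BiHomLie (br : g -> g -> g) (al be : g -> g) :=
  [/\ lin_map al /\ lin_map be, bilin_map br,
      (forall p, al (be p) = be (al p)),
      (forall p q, br (be p) (al q) = - br (be q) (al p)) &
      (forall p q r,
          br (be (be p)) (br (be q) (al r)) + br (be (be q)) (br (be r) (al p))
          + br (be (be r)) (br (be p) (al q)) = 0)].

Definition is_compatible_BiHomLie (br1 br2 : g -> g -> g) (al be : g -> g) :=
  [/\ is_BiHomLie br1 al be, is_BiHomLie br2 al be &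
      forall lam eta : K,
        is_BiHomLie (fun p q => lam *: br1 p q + eta *: br2 p q) al be].

Definition is_rep (br : g -> g -> g) (al be : g -> g)
    (act : g -> V -> V) (aV bV : V -> V) :=
  [/\ lin_map aV /\ lin_map bV /\ (forall v, aV (bV v) = bV (aV v)),
      bilin_map act,
      (forall p v, act (al p) (aV v) = aV (act p v)),
      (forall p v, act (be p) (bV v) = bV (act p v)) &
      (forall p q v, act (br (be p) q) (bV v)
                     = act (al (be p)) (act q v) - act (be q) (act (al p) v))].

Definition is_compatible_rep (br1 br2 : g -> g -> g) (al be : g -> g)
    (act1 act2 : g -> V -> V) (aV bV : V -> V) :=
  [/\ is_rep br1 al be act1 aV bV, is_rep br2 al be act2 aV bV &
      forall p q v,
        act2 (br1 (be p) q) (bV v) + act1 (br2 (be p) q) (bV v)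
        = act1 (al (be p)) (act2 q v) - act2 (be q) (act1 (al p) v)
          + act2 (al (be p)) (act1 q v) - act1 (be q) (act2 (al p) v)].

Definition cochain (n : nat) := ('I_n -> g) -> V.

Definition multilinear n (f : cochain n) :=
  forall (p : 'I_n -> g) (i : 'I_n) (a : K) (x y : g),
    f (fun j => if j == i then a *: x + y else p j)
    = a *: f (fun j => if j == i then x else p j)
      + f (fun j => if j == i then y else p j).

Definition is_cochain (al be : g -> g) (aV bV : V -> V) n (f : cochain n) :=
  [/\ multilinear f,
      (forall p, aV (f p) = f (fun i => al (p i))) &
      (forall p, bV (f p) = f (fun i => be (p i)))].

Definition is_cochain0 (aV bV : V -> V) (v : V) := aV v = v /\ bV v = v.

(** nat-indexed access to an argument list (0 outside the range). *)
Definition nthp m (p : 'I_m -> g) (k : nat) : g := oapp p 0 (insub k : option 'I_m).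

(** Coboundary on C^0: delta(v)(p) = al be^{-1}(p) . v  (bi = be^{-1}). *)
Definition delta0 (act : g -> V -> V) (al bi : g -> g) (v : V) : cochain 1 :=
  fun p => act (al (bi (p ord0))) v.

(** Coboundary on C^n, n >= 1 (ai = al^{-1}); indices are 0-based here,
   so the sign (-1)^i of the paper becomes (-1)^(i+1), and (-1)^(i+j+1)
   keeps its parity. *)
Definition delta (br : g -> g -> g) (act : g -> V -> V) (al be ai : g -> g)
    n (f : cochain n) : cochain n.+1 :=
  fun p =>
    \sum_(i < n.+1) ((-1) ^+ i.+1) *:
        act (al (iter n.-1 be (p i))) (f (fun k : 'I_n => nthp p (bump i k)))
  + \sum_(i < n.+1) \sum_(j < n.+1 | (i < j)%N) ((-1) ^+ (i + j + 1)) *: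
        f (fun k : 'I_n =>
             if val k == 0%N then br (ai (be (p i))) (p j)
             else be (nthp p (bump i (bump j.-1 k.-1)))).

(** Compatible cochains: C^0_cBiHom and C^n_cBiHom = C^n_BiHom^{(+) n}. *)
Definition is_ccochain0 (act1 act2 : g -> V -> V) (al bi : g -> g)
    (aV bV : V -> V) (v : V) :=
  is_cochain0 aV bV v /\ forall p, act1 (al (bi p)) v = act2 (al (bi p)) v.

Definition is_ccochain (al be : g -> g) (aV bV : V -> V) n
    (F : 'I_n -> cochain n) := forall i, is_cochain al be aV bV (F i).

(** nat-indexed components of an n-family (zero cochain outside the range). *)
Definition famn n m (F : 'I_n -> cochain m) (k : nat) : cochain m :=
  oapp F (fun _ => 0) (insub k : option 'I_n).

Definition cdelta0 (act1 : g -> V -> V) (al bi : g -> g) (v : V) : 'I_1 -> cochain 1 :=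
  fun _ => delta0 act1 al bi v.

(** delta_cBiHom on C^n, n >= 1: k-th component (0-based) is
   1delta f_k (if k < n) + 2delta f_{k-1} (if k > 0). *)
Definition cdelta (br1 br2 : g -> g -> g) (act1 act2 : g -> V -> V)
    (al be ai : g -> g) n (F : 'I_n -> cochain n) : 'I_n.+1 -> cochain n.+1 :=
  fun k p =>
    (if (k < n)%N then delta br1 act1 al be ai (famn F k) p else 0)
  + (if (0 < k)%N then delta br2 act2 al be ai (famn F k.-1) p else 0).

Definition phi0 (v : V) : V := 2%:R^-1 *: v.
Definition phi n (F : 'I_n -> cochain n) : cochain n := fun p => \sum_(i < n) F i p.

Definition br_plus (br1 br2 : g -> g -> g) := fun p q => br1 p q + br2 p q.
Definition act_plus (act1 act2 : g -> V -> V) := fun p v => act1 p v + act2 p v.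

End BiHom.

From mathcomp Require Import all_boot all_algebra.
Import GRing.Theory.
Local Open Scope ring_scope.

(** The chain-map identity is formal and uses only the linearity of the
    structure maps, never the BiHom-Lie identities.  The coboundary is linear
    in the cochain, so [delta_+ (phi F)] is the sum of the [delta_+ (F k)];
    the bracket enters a cochain only through its first argument, so
    multilinearity splits each [delta_+ (F k)] into [1delta (F k) + 2delta (F k)].
    Summing the components of [delta_cBiHom F] collects exactly these terms,
    the [2delta] ones shifted by one index.  In degree 0 the condition
    [act1 x v = act2 x v] defining [C^0_cBiHom] turns
    [(act1 x v + act2 x v) / 2] into [act1 x v]. *)

Section LinearMaps.
Context {K : fieldType} {A B : lmodType K} {f : A -> B}.
Hypothesis lin_f : lin_map f.

Lemma lin_map0 : f 0 = 0.
Proof.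
have := lin_f 1 0 0; rewrite !scale1r addr0 => f00.
by apply: (addrI (f 0)); rewrite addr0 -f00.
Qed.

Lemma lin_mapD x y : f (x + y) = f x + f y.
Proof. by have := lin_f 1 x y; rewrite !scale1r. Qed.

Lemma lin_mapZ a x : f (a *: x) = a *: f x.
Proof. by rewrite -[a *: x]addr0 lin_f lin_map0 addr0. Qed.

Lemma lin_map_sum m (F : 'I_m -> A) : f (\sum_(i < m) F i) = \sum_(i < m) f (F i).
Proof. exact: (big_morph f lin_mapD lin_map0). Qed.

End LinearMaps.

Lemma bilin_map_linr (K : fieldType) (A B C : lmodType K) (f : A -> B -> C) x :
  bilin_map f -> lin_map (f x).
Proof. by move=> [_ linr] a y z; apply: linr. Qed.

Section SumOfCochains.
Context {K : fieldType} {g V : lmodType K}.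
Implicit Types (br : g -> g -> g) (act : g -> V -> V).

Lemma lin_map_act_plus act1 act2 x :
  lin_map (act1 x) -> lin_map (act2 x) -> lin_map (act_plus act1 act2 x).
Proof. by move=> lin1 lin2 a y z; rewrite /act_plus lin1 lin2 scalerDr addrACA. Qed.

Lemma is_cochain_phi al be aV bV n (F : 'I_n -> cochain g V n) :
  lin_map aV -> lin_map bV -> is_ccochain al be aV bV F ->
  is_cochain al be aV bV (phi F).
Proof.
move=> lin_aV lin_bV cF; split=> [p i a x y|p|p].
- rewrite /phi scaler_sumr -big_split; apply: eq_bigr => k _.
  by case: (cF k) => mlin _ _; rewrite mlin.
- by rewrite /phi lin_map_sum //; apply: eq_bigr => k _; case: (cF k) => _ -> _.
- by rewrite /phi lin_map_sum //; apply: eq_bigr => k _; case: (cF k) => _ _ ->.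
Qed.

Lemma multilinear_headD m (f : cochain g V m.+1) (p : 'I_m.+1 -> g) x y :
  multilinear f ->
  f (fun k => if val k == 0%N then x + y else p k)
  = f (fun k => if val k == 0%N then x else p k)
    + f (fun k => if val k == 0%N then y else p k).
Proof. by move=> mlin_f; have := mlin_f p ord0 1 x y; rewrite !scale1r. Qed.

Lemma delta_plus br1 br2 act1 act2 al be ai m (f : cochain g V m.+1) p :
  multilinear f ->
  delta (br_plus br1 br2) (act_plus act1 act2) al be ai f p
  = delta br1 act1 al be ai f p + delta br2 act2 al be ai f p.
Proof.
move=> mlin_f; rewrite /delta addrACA; congr (_ + _); rewrite -big_split.
- by apply: eq_bigr => i _; rewrite /act_plus scalerDr.
- apply: eq_bigr => i _; rewrite -big_split; apply: eq_bigr => j _.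
  by rewrite /br_plus multilinear_headD // scalerDr.
Qed.

Lemma delta_phi br act al be ai n (F : 'I_n -> cochain g V n) p :
  (forall x, lin_map (act x)) ->
  delta br act al be ai (phi F) p = \sum_(k < n) delta br act al be ai (F k) p.
Proof.
move=> lin_act; rewrite /delta /phi big_split /=; congr (_ + _).
- rewrite [RHS]exchange_big; apply: eq_bigr => i _.
  by rewrite lin_map_sum // scaler_sumr.
- rewrite [RHS]exchange_big; apply: eq_bigr => i _.
  by rewrite [RHS]exchange_big; apply: eq_bigr => j _; rewrite scaler_sumr.
Qed.

Lemma phi_cdelta br1 br2 act1 act2 al be ai n (F : 'I_n -> cochain g V n) p :
  phi (cdelta br1 br2 act1 act2 al be ai F) p
  = \sum_(k < n) delta br1 act1 al be ai (F k) p
    + \sum_(k < n) delta br2 act2 al be ai (F k) p.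
Proof.
rewrite /phi /cdelta big_split /=; congr (_ + _).
- rewrite big_ord_recr /= ltnn addr0; apply: eq_bigr => k _.
  by rewrite ltn_ord /famn valK.
- by rewrite big_ord_recl /= add0r; apply: eq_bigr => k _; rewrite /famn /= valK.
Qed.

Lemma phi_chain_map br1 br2 act1 act2 al be ai n (F : 'I_n.+1 -> cochain g V n.+1) :
  (forall x, lin_map (act1 x)) -> (forall x, lin_map (act2 x)) ->
  (forall k, multilinear (F k)) ->
  delta (br_plus br1 br2) (act_plus act1 act2) al be ai (phi F)
  =1 phi (cdelta br1 br2 act1 act2 al be ai F).
Proof.
move=> lin1 lin2 mlinF p.
rewrite delta_phi => [|x]; last exact: lin_map_act_plus.
by rewrite phi_cdelta -big_split; apply: eq_bigr => k _; rewrite delta_plus.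
Qed.

Lemma is_cochain0_phi0 (aV bV : V -> V) (v : V) :
  lin_map aV -> lin_map bV -> is_cochain0 aV bV v -> is_cochain0 aV bV (phi0 v).
Proof.
by move=> lin_aV lin_bV [aVv bVv]; rewrite /is_cochain0 /phi0 !lin_mapZ // aVv bVv.
Qed.

Lemma phi0_chain_map act1 act2 al bi aV bV v :
  (2%:R : K) != 0 ->
  (forall x, lin_map (act1 x)) -> (forall x, lin_map (act2 x)) ->
  is_ccochain0 act1 act2 al bi aV bV v ->
  delta0 (act_plus act1 act2) al bi (phi0 v) =1 phi (cdelta0 act1 al bi v).
Proof.
move=> two_neq0 lin1 lin2 [_ act12v] p.
have half_half : (2%:R^-1 + 2%:R^-1 : K) = 1.
  by rewrite -mulr2n -(mulr_natr (2%:R^-1 : K)) mulVf.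
rewrite /phi /cdelta0 big_ord1 /delta0 /act_plus /phi0.
rewrite (lin_mapZ (lin1 _)) (lin_mapZ (lin2 _)) act12v.
by rewrite -scalerDl half_half scale1r.
Qed.

End SumOfCochains.

Theorem mainTheorem6 (K : fieldType) (g V : lmodType K)
    (br1 br2 : g -> g -> g) (al be ai bi : g -> g)
    (act1 act2 : g -> V -> V) (aV bV : V -> V) :
  (2%:R : K) != 0 ->
  is_compatible_BiHomLie br1 br2 al be ->
  is_compatible_rep br1 br2 al be act1 act2 aV bV ->
  cancel al ai -> cancel ai al -> cancel be bi -> cancel bi be ->
  bijective aV -> bijective bV ->
  let brp := br_plus br1 br2 in
  let actp := act_plus act1 act2 in
  (* degree 0: phi_0 well defined and a chain map *)
  [/\ (forall v, is_ccochain0 act1 act2 al bi aV bV v ->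
         is_cochain0 aV bV (phi0 v) /\
         delta0 actp al bi (phi0 v) =1 phi (cdelta0 act1 al bi v)),
      (* degree n >= 1: phi_n well defined and a chain map *)
      (forall n (F : 'I_n -> cochain g V n), (0 < n)%N ->
         is_ccochain al be aV bV F ->
         is_cochain al be aV bV (phi F) /\
         delta brp actp al be ai (phi F) =1 phi (cdelta br1 br2 act1 act2 al be ai F)),
      (* induced map on cohomology: cocycles go to cocycles ... *)
      (forall v, is_ccochain0 act1 act2 al bi aV bV v ->
         (forall k, cdelta0 act1 al bi v k =1 (fun _ => 0)) -> delta0 actp al bi (phi0 v) =1 (fun _ => 0)),
      (forall n (F : 'I_n -> cochain g V n), (0 < n)%N ->
         is_ccochain al be aV bV F ->
         (forall k, cdelta br1 br2 act1 act2 al be ai F k =1 (fun _ => 0)) ->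
         delta brp actp al be ai (phi F) =1 (fun _ => 0)) &
      (* ... and coboundaries to coboundaries *)
      ((forall v, is_ccochain0 act1 act2 al bi aV bV v ->
         exists w, is_cochain0 aV bV w /\
           phi (cdelta0 act1 al bi v) =1 delta0 actp al bi w) /\
      (forall n (G : 'I_n -> cochain g V n), (0 < n)%N ->
         is_ccochain al be aV bV G ->
         exists H : cochain g V n, is_cochain al be aV bV H /\
           phi (cdelta br1 br2 act1 act2 al be ai G) =1 delta brp actp al be ai H))].
Proof.
move=> two_neq0 _ [rep1 rep2 _] _ _ _ _ _ _ brp actp.
case: rep1 => [[lin_aV [lin_bV _]] bilin1 _ _ _]; case: rep2 => [_ bilin2 _ _ _].
have lin1 x : lin_map (act1 x) by exact: bilin_map_linr.
have lin2 x : lin_map (act2 x) by exact: bilin_map_linr.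
have deg0 v : is_ccochain0 act1 act2 al bi aV bV v ->
    is_cochain0 aV bV (phi0 v) /\ delta0 actp al bi (phi0 v) =1 phi (cdelta0 act1 al bi v).
  move=> cv; split; first by apply: is_cochain0_phi0 => //; case: cv.
  exact: phi0_chain_map two_neq0 lin1 lin2 cv.
have degS n (F : 'I_n -> cochain g V n) : (0 < n)%N -> is_ccochain al be aV bV F ->
    is_cochain al be aV bV (phi F) /\
    delta brp actp al be ai (phi F) =1 phi (cdelta br1 br2 act1 act2 al be ai F).
  case: n F => // n F _ cF; split; first exact: is_cochain_phi.
  by apply: phi_chain_map => // k; case: (cF k).
split; [exact: deg0 | exact: degS | | | split].
- move=> v cv cocycle p; rewrite (deg0 v cv).2 /phi big1 // => k _.
  exact: cocycle.
- move=> n F n_gt0 cF cocycle p; rewrite (degS n F n_gt0 cF).2 /phi big1 // => k _.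
  exact: cocycle.
- by move=> v cv; exists (phi0 v); have [cw chain] := deg0 v cv; split=> // p; rewrite chain.
- move=> n G n_gt0 cG; exists (phi G); have [cH chain] := degS n G n_gt0 cG.
  by split=> // p; rewrite chain.
Qed.
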